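(* For every $M\geq 1$, $$h(M)=\sum_{0\leq 2j\leq M-1}(j+1)\binom{M-j-1}{j}.$$
   Context: The perimeter of a nonempty partition $\lambda$ with largest part $\lambda_1$ and $\ell(\lambda)$ parts is $\lambda_1+\ell(\lambda)-1$. $h(M)$ is the total number of parts, summed over all partitions into distinct parts with perimeter $M$. *)

From mathcomp Require Import all_boot.
Set Implicit Arguments. Unset Strict Implicit. Unset Printing Implicit Defensive.

(* A partition into distinct parts is determined by its (finite, nonempty)
   set of parts, all positive integers.  A partition with perimeter M has
   largest part <= M, so it suffices to range over sets of parts drawn from
   {1,...,M}; we encode them as subsets of 'I_M.+1 avoiding 0. *)

Definition parts (M : nat) (S : {set 'I_M.+1}) : seq nat :=
  sort geq [seq val i | i in S].

Definition is_distinct_partition (M : nat) (S : {set 'I_M.+1}) : bool :=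
  (S != set0) && (ord0 \notin S).

Definition largest_part (M : nat) (S : {set 'I_M.+1}) : nat :=
  \max_(i in S) val i.

Definition num_parts (M : nat) (S : {set 'I_M.+1}) : nat := size (parts S).

Definition perimeter (M : nat) (S : {set 'I_M.+1}) : nat :=
  largest_part S + num_parts S - 1.

Definition h (M : nat) : nat :=
  \sum_(S : {set 'I_M.+1} | is_distinct_partition S && (perimeter S == M))
     num_parts S.

From mathcomp Require Import all_boot zify.

Set Implicit Arguments.
Unset Strict Implicit.
Unset Printing Implicit Defensive.

(* A partition into k distinct parts with perimeter M has largest part
   m = M + 1 - k, so its set of parts is a k-subset of {1, ..., m} containing m:
   there are C(m - 1, k - 1) = C(M - k, k - 1) of them.  Weighting by k = j + 1
   gives the sum, whose terms vanish unless 2j <= M - 1. *)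

Lemma num_partsE M (S : {set 'I_M.+1}) : num_parts S = #|S|.
Proof. by rewrite /num_parts /parts size_sort size_map cardE. Qed.

Definition pos_upto M m : {set 'I_M.+1} := [set i : 'I_M.+1 | 0 < i <= m].

Lemma card_pos_upto M m : m <= M -> #|pos_upto M m| = m.
Proof.
move=> le_mM.
have -> : pos_upto M m = [set lift ord0 (widen_ord le_mM i) | i : 'I_m].
  apply/setP => x; rewrite !inE.
  apply/idP/imsetP => [/andP[x_gt0 le_xm]|[i _ ->]].
    have lt_x1m : x.-1 < m by lia.
    exists (Ordinal lt_x1m) => //; apply: val_inj; rewrite /= /bump /=; lia.
  by rewrite /= /bump /= add1n ltn_ord.
rewrite card_imset ?card_ord // => i j /lift_inj/(congr1 val) eq_ij.
exact: val_inj.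
Qed.

Lemma card_draws_mem (T : finType) (A : {set T}) x k : x \in A ->
  #|[set S : {set T} | [&& S \subset A, x \in S & #|S| == k.+1]]|
    = 'C(#|A|.-1, k).
Proof.
move=> xA.
have -> : [set S : {set T} | [&& S \subset A, x \in S & #|S| == k.+1]]
    = [set x |: U | U in [set U : {set T} | U \subset A :\ x & #|U| == k]].
  apply/setP => S; rewrite !inE.
  apply/idP/imsetP => [/and3P[sSA xS /eqP cS]|[U]].
    exists (S :\ x); last by rewrite setD1K.
    by rewrite inE setSD //=; move: cS; rewrite (cardsD1 x) xS add1n => -[->].
  rewrite inE subsetD1 => /andP[/andP[sUA xU] cU] ->.
  by rewrite subUset sub1set xA sUA setU11 cardsU1 xU add1n eqSS.
rewrite card_in_imset; first by rewrite cards_draws (cardsD1 x A) xA.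
move=> U V; rewrite !inE !subsetD1.
move=> /andP[/andP[_ xU] _] /andP[/andP[_ xV] _] eUV.
by rewrite -(setU1K xU) -(setU1K xV) eUV.
Qed.

Definition distinct_partitions M k : {set {set 'I_M.+1}} :=
  [set S | is_distinct_partition S && (perimeter S == M) && (#|S| == k)].

Lemma largest_part_ub M (S : {set 'I_M.+1}) i : i \in S -> i <= largest_part S.
Proof. exact: leq_bigmax_cond. Qed.

Lemma largest_partE M (S : {set 'I_M.+1}) x :
  x \in S -> (forall i, i \in S -> i <= x) -> largest_part S = x.
Proof.
move=> xS le_Sx; apply/eqP; rewrite eqn_leq largest_part_ub // andbT.
exact/bigmax_leqP.
Qed.

Lemma distinct_partition_perimeterE M k (S : {set 'I_M.+1}) :
  k <= M -> #|S| = k.+1 ->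
  is_distinct_partition S && (perimeter S == M)
    = (S \subset pos_upto M (M - k)) && (inord (M - k) \in S).
Proof.
move=> le_kM cardS; rewrite /is_distinct_partition /perimeter num_partsE cardS.
have val_x : (inord (M - k) : 'I_M.+1) = M - k :> nat.
  by rewrite inordK // ltnS leq_subr.
apply/idP/idP => [/andP[/andP[nzS S0] /eqP perS]|/andP[sSA xS]].
  have S_gt0 : 0 < #|S| by rewrite cardS.
  have [i0 i0S lpE] := eq_bigmax_cond (fun i : 'I_M.+1 => val i) S_gt0.
  rewrite -/(largest_part S) /= in lpE.
  have i0E : inord (M - k) = i0 by apply: val_inj; rewrite /= val_x; lia.
  rewrite i0E i0S andbT; apply/subsetP => i iS; rewrite inE -val_x i0E.
  have := largest_part_ub iS; rewrite lpE => ->.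
  rewrite andbT lt0n; apply: contraNneq S0 => i_eq0.
  by have -> : ord0 = i by apply: val_inj.
have le_Sx (i : 'I_M.+1) : i \in S -> i <= (inord (M - k) : 'I_M.+1).
  by move/(subsetP sSA); rewrite inE val_x => /andP[].
have S0 : ord0 \notin S by apply/negP => /(subsetP sSA); rewrite inE.
rewrite (largest_partE xS le_Sx) val_x S0 andbT.
by apply/andP; split; [apply/set0Pn; exists (inord (M - k)) | lia].
Qed.

Lemma card_distinct_partitions M k : 0 < M -> k <= M ->
  #|distinct_partitions M k.+1| = 'C(M - k.+1, k).
Proof.
move=> M_gt0 le_kM.
have -> : distinct_partitions M k.+1 = [set S : {set 'I_M.+1} |
    [&& S \subset pos_upto M (M - k), inord (M - k) \in S & #|S| == k.+1]].
  apply/setP => S; rewrite !inE andbA.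
  have [cardS|] := eqVneq #|S| k.+1; last by rewrite !andbF.
  by rewrite !andbT (distinct_partition_perimeterE le_kM cardS).
case: ltngtP le_kM => [lt_kM _|//|-> _].
  rewrite card_draws_mem ?card_pos_upto ?leq_subr ?subnS //.
  by rewrite inE inordK ?ltnS ?leq_subr // subn_gt0 lt_kM leqnn.
(* k = M would force the largest part to be 0. *)
rewrite subnS subnn bin0n eqn0Ngt M_gt0; apply: eq_card0 => S; rewrite !inE.
by apply/and3P => -[/subsetP sSA /sSA]; rewrite inE inordK.
Qed.

Lemma h_by_num_parts M :
  h M = \sum_(j < M.+1) j.+1 * #|distinct_partitions M j.+1|.
Proof.
rewrite /h (partition_big (fun S : {set 'I_M.+1} => inord #|S|.-1 : 'I_M.+1)
  predT) //=.
apply: eq_bigr => j _; rewrite mulnC -sum_nat_const.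
have inord_cardE (S : {set 'I_M.+1}) :
    is_distinct_partition S -> (inord #|S|.-1 == j) = (#|S| == j.+1).
  case/andP=> nzS _; have S_gt0 : 0 < #|S| by rewrite card_gt0.
  have le_SM : #|S|.-1 < M.+1.
    by have := subset_leq_card (subsetT S); rewrite cardsT card_ord; lia.
  by rewrite -(inj_eq val_inj) /= inordK // -eqSS prednK.
apply: eq_big => S; rewrite ?inE.
  by case/boolP: (is_distinct_partition S) => //= /inord_cardE ->.
by case/andP=> /andP[/inord_cardE -> _]; rewrite num_partsE => /eqP.
Qed.

Theorem mainTheorem9 (M : nat) : 1 <= M ->
  h M = \sum_(0 <= j < M.+1 | 2 * j <= M - 1) (j + 1) * 'C(M - j - 1, j).
Proof.
move=> M_gt0; rewrite h_by_num_parts big_mkord [RHS]big_mkcond /=.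
apply: eq_bigr => j _; have le_jM : j <= M by rewrite -ltnS.
rewrite card_distinct_partitions // addn1 subnS -subn1.
by case: leqP => // lt_M_2j; rewrite bin_small ?muln0 //; lia.
Qed.
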